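(* Consider a finite tabular MDP with a unique optimal policy $\pi^*$ and $d_\rho^\pi(s)\ge d_{\min}>0$ for all states $s$ and all full-support policies $\pi$. For any $\eta\in(0,\infty)$, let $\pi_t$ be generated by the discrete DG update $\pi_{t+1}(a|s)=\pi_t(a|s)e^{\alpha w_t(s,a)U_t(s,a)}/Z^t_s$ with sufficiently small step size $\alpha>0$ (as required for $\pi_t\to\pi^*$). Then $\delta_t:=V^*-V(\pi_t)=O(1/t)$.
   Context: A finite MDP $(\mathcal S,\mathcal A,P,r,\gamma,\rho)$ with $r(s,a)\in[0,1]$, $\gamma\in[0,1)$; tabular softmax policies. $V^\pi,Q^\pi$ discounted value functions, $V(\pi)=\mathbb{E}_{s\sim\rho}V^\pi(s)$, $V^*=V(\pi^* )$, $d_\rho^\pi(s)=(1-\gamma)\sum_{t\ge0}\gamma^t\Pr(s_t=s\mid\rho,\pi)$. $U_t(s,a):=Q^{\pi_t}(s,a)-V^{\pi_t}(s)$, $\ell_t(s,a):=-\log\pi_t(a|s)$, $w_t(s,a):=\sigma(U_t(s,a)\ell_t(s,a)/\eta)$ with $\sigma(x)=1/(1+e^{-x})$, $Z^t_s:=\sum_{a'}\pi_t(a'|s)e^{\alpha w_t(s,a')U_t(s,a')}$. *)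

From mathcomp Require Import all_boot all_order all_algebra.
From mathcomp Require Import all_classical all_reals all_analysis.
Set Implicit Arguments. Unset Strict Implicit. Unset Printing Implicit Defensive.
Import Order.TTheory GRing.Theory Num.Theory.
Import numFieldNormedType.Exports.
Local Open Scope ring_scope.

Section MDP.
Variables (R : realType) (S A : finType).
(* P s a s' = P(s'|s,a); r s a = r(s,a); gamma discount; rho initial dist. *)
Variables (P : S -> A -> S -> R) (r : S -> A -> R) (gamma : R) (rho : S -> R).

Definition is_dist (T : finType) (mu : T -> R) : Prop :=
  (forall x, 0 <= mu x) /\ \sum_(x : T) mu x = 1.

Definition finite_mdp : Prop :=
  (forall s a, is_dist (P s a)) /\ (forall s a, 0 <= r s a <= 1) /\
  0 <= gamma < 1 /\ is_dist rho.

(* stochastic tabular policy pi s a = pi(a|s) *)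
Definition is_policy (pi : S -> A -> R) : Prop := forall s, is_dist (pi s).
Definition full_support (pi : S -> A -> R) : Prop := forall s a, 0 < pi s a.

Fixpoint state_dist (pi : S -> A -> R) (mu : S -> R) (t : nat) : S -> R :=
  match t with
  | O => mu
  | t'.+1 => fun s' =>
      \sum_(s : S) \sum_(a : A) state_dist pi mu t' s * pi s a * P s a s'
  end.

Definition dirac (s : S) : S -> R := fun s' => if s' == s then 1 else 0.

Definition Vfun (pi : S -> A -> R) (s : S) : R :=
  limn (series (fun t : nat => gamma ^+ t *
     \sum_(s' : S) \sum_(a : A) state_dist pi (dirac s) t s' * pi s' a * r s' a)).

Definition Qfun (pi : S -> A -> R) (s : S) (a : A) : R :=
  r s a + gamma * \sum_(s' : S) P s a s' * Vfun pi s'.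

Definition Vrho (pi : S -> A -> R) : R := \sum_(s : S) rho s * Vfun pi s.

Definition dvisit (pi : S -> A -> R) (s : S) : R :=
  (1 - gamma) * limn (series (fun t : nat => gamma ^+ t * state_dist pi rho t s)).

Definition optimal_policy (pi : S -> A -> R) : Prop :=
  is_policy pi /\ forall pi', is_policy pi' -> forall s, Vfun pi' s <= Vfun pi s.

Definition unique_optimal_policy (pistar : S -> A -> R) : Prop :=
  optimal_policy pistar /\ forall pi, optimal_policy pi -> pi = pistar.

Definition sigmoid (x : R) : R := 1 / (1 + expR (- x)).

Definition Ufun (pi : S -> A -> R) s a : R := Qfun pi s a - Vfun pi s.
Definition ellfun (pi : S -> A -> R) s a : R := - ln (pi s a).
Definition wfun (eta : R) (pi : S -> A -> R) s a : R :=
  sigmoid (Ufun pi s a * ellfun pi s a / eta).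

Definition Zfun (eta alpha : R) (pi : S -> A -> R) (s : S) : R :=
  \sum_(a' : A) pi s a' * expR (alpha * wfun eta pi s a' * Ufun pi s a').

Definition dg_step (eta alpha : R) (pi : S -> A -> R) : S -> A -> R :=
  fun s a => pi s a * expR (alpha * wfun eta pi s a * Ufun pi s a)
             / Zfun eta alpha pi s.

Definition dg_iter (eta alpha : R) (pi0 : S -> A -> R) (t : nat) : S -> A -> R :=
  iter t (dg_step eta alpha) pi0.

End MDP.

From Pilot Require Import Defs.
From mathcomp Require Import all_boot all_order all_algebra.
From mathcomp Require Import all_classical all_reals all_analysis.
From mathcomp Require Import ring lra.
Set Implicit Arguments. Unset Strict Implicit. Unset Printing Implicit Defensive.
Import Order.TTheory GRing.Theory Num.Theory.
Import numFieldNormedType.Exports.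
Local Open Scope classical_set_scope.
Local Open Scope ring_scope.

(* By the performance-difference lemma, each DG step gains
   [V^{pi_{t+1}} - V^{pi_t} >= c * sum_a pi_t w_t U_t^2 >= 0] at every state, so the
   values increase to a limit [Vlim] and these weighted squared advantages are
   summable.  If some action had [Q > Vlim] in the limit, its advantage would stay
   positive and its log-probability would grow without bound; hence [Vlim] solves
   the Bellman optimality inequality and [V^{pi_t}] converges to [V^{pistar}]
   uniformly.  Since the optimal action [astar s] is unique, all other advantages
   eventually become negative.  From then on [U_t(s, astar s) >= 0] and
   [ln pi_t(astar s | s)] decreases by at most a summable amount, so
   [pi_t(astar s | s) >= p0 > 0]; the gain then dominates [sum_s U_t(s, astar s)^2],
   while the suboptimality [Delta_t = sum_s (V^{pistar} - V^{pi_t})(s)] is at most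
   [sum_s U_t(s, astar s) / (1 - gamma)].  By Cauchy-Schwarz,
   [Delta_{t+1} <= Delta_t - kappa Delta_t^2], whence [Delta_t = O(1/t)].
   The argument works for every step size [alpha > 0] and does not use the lower
   bound [dmin] on the visitation distribution. *)

Section PolicyBasics.
Variables (R : realType) (S A : finType) (pi : S -> A -> R).
Hypothesis pi_policy : is_policy pi.

Lemma policy_ge0 s a : 0 <= pi s a. Proof. by case: (pi_policy s). Qed.

Lemma sum_policy s : \sum_(a : A) pi s a = 1. Proof. by case: (pi_policy s). Qed.

Lemma policy_le1 s a : pi s a <= 1.
Proof.
rewrite -(sum_policy s) (bigD1 a) //= lerDl.
by apply: sumr_ge0 => b _; exact: policy_ge0.
Qed.

Lemma sum_policy_const s c : \sum_(a : A) pi s a * c = c.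
Proof. by rewrite -big_distrl /= sum_policy mul1r. Qed.

End PolicyBasics.

Section PolicyEvaluation.
Variables (R : realType) (S A : finType).
Variables (P : S -> A -> S -> R) (r : S -> A -> R) (gamma : R).

Local Notation V := (Vfun P r gamma).
Local Notation U := (Ufun P r gamma).
Local Notation dirac := (Defs.dirac R).

Definition ptrans (pi : S -> A -> R) s s1 := \sum_(a : A) pi s a * P s a s1.
Definition preward (pi : S -> A -> R) s := \sum_(a : A) pi s a * r s a.

Definition reward_at (pi : S -> A -> R) s t :=
  \sum_(s' : S) \sum_(a : A) state_dist P pi (dirac s) t s' * pi s' a * r s' a.

Definition disc_reward (pi : S -> A -> R) s t := gamma ^+ t * reward_at pi s t.

Lemma exchange_sum_mul (c : S -> R) (h : S -> S -> R) (k : S -> A -> R) :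
  \sum_(s' : S) \sum_(a : A) (\sum_(s1 : S) c s1 * h s1 s') * k s' a =
  \sum_(s1 : S) c s1 * \sum_(s' : S) \sum_(a : A) h s1 s' * k s' a.
Proof.
under eq_bigr do under eq_bigr do rewrite big_distrl /=.
under [RHS]eq_bigr do rewrite big_distrr /=.
under eq_bigr do rewrite exchange_big /=.
rewrite exchange_big /=; apply: eq_bigr => s1 _; apply: eq_bigr => s' _.
by rewrite big_distrr /=; apply: eq_bigr => a _; rewrite mulrA.
Qed.

Lemma state_distS pi mu t x : state_dist P pi mu t.+1 x =
  \sum_(s : S) \sum_(a : A) state_dist P pi mu t s * pi s a * P s a x.
Proof. by []. Qed.

Lemma state_dist_mix pi mu t x :
  state_dist P pi mu t x = \sum_(s0 : S) mu s0 * state_dist P pi (dirac s0) t x.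
Proof.
elim: t x => [|t IH] x /=.
  rewrite (bigD1 x) //= /Defs.dirac eqxx mulr1 big1 ?addr0 // => s0 /negbTE.
  by rewrite eq_sym => ->; rewrite mulr0.
under eq_bigr do under eq_bigr do rewrite IH -mulrA.
rewrite (exchange_sum_mul mu (fun s1 => state_dist P pi (dirac s1) t)
  (fun s' a => pi s' a * P s' a x)).
apply: eq_bigr => s1 _; congr (_ * _).
by apply: eq_bigr => s' _; apply: eq_bigr => a _; rewrite mulrA.
Qed.

Lemma state_distSl pi mu t x :
  state_dist P pi mu t.+1 x = state_dist P pi (state_dist P pi mu 1) t x.
Proof.
elim: t x => [|t IH] x //.
by rewrite state_distS [RHS]state_distS; under eq_bigr do under eq_bigr do rewrite IH.
Qed.

Lemma sum_dirac_mul s (f : S -> R) : \sum_(s' : S) dirac s s' * f s' = f s.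
Proof.
rewrite (bigD1 s) //= /Defs.dirac eqxx mul1r big1 ?addr0 // => s' /negbTE ->.
by rewrite mul0r.
Qed.

Lemma sum_dirac s : \sum_(s' : S) dirac s s' = 1.
Proof.
by rewrite (bigD1 s) //= big1 ?addr0 /Defs.dirac ?eqxx // => s' /negbTE ->.
Qed.

Lemma state_dist1_dirac pi s s1 : state_dist P pi (dirac s) 1 s1 = ptrans pi s s1.
Proof.
rewrite state_distS -(sum_dirac_mul s (fun s' => ptrans pi s' s1)).
by apply: eq_bigr => s' _; rewrite /ptrans big_distrr /=; apply: eq_bigr => a _; rewrite mulrA.
Qed.

Lemma reward_at0 pi s : reward_at pi s 0 = preward pi s.
Proof.
rewrite /reward_at -(sum_dirac_mul s (preward pi)).
by apply: eq_bigr => s' _; rewrite /preward big_distrr /=; apply: eq_bigr => a _; rewrite mulrA.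
Qed.

Lemma reward_atS pi s t :
  reward_at pi s t.+1 = \sum_(s1 : S) ptrans pi s s1 * reward_at pi s1 t.
Proof.
rewrite /reward_at.
under eq_bigr do under eq_bigr do rewrite state_distSl state_dist_mix -mulrA.
rewrite (exchange_sum_mul _ (fun s1 => state_dist P pi (dirac s1) t)
  (fun s' a => pi s' a * r s' a)).
apply: eq_bigr => s1 _; rewrite state_dist1_dirac; congr (_ * _).
by apply: eq_bigr => s' _; apply: eq_bigr => a _; rewrite mulrA.
Qed.

Lemma series_disc_rewardS pi s n : series (disc_reward pi s) n.+1 =
  preward pi s + gamma * \sum_(s1 : S) ptrans pi s s1 * series (disc_reward pi s1) n.
Proof.
rewrite /series /= big_nat_recl //; congr (_ + _).
  by rewrite /disc_reward expr0 mul1r reward_at0.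
under eq_bigr do rewrite /disc_reward reward_atS exprS -mulrA big_distrr /=.
rewrite -big_distrr /= exchange_big /=; congr (_ * _).
apply: eq_bigr => s1 _; rewrite big_distrr /=.
by apply: eq_bigr => k _; rewrite mulrCA.
Qed.

Lemma sum_policy_Qvalue pi' (F : S -> R) s :
  \sum_(a : A) pi' s a * (r s a + gamma * \sum_(s1 : S) P s a s1 * F s1) =
  preward pi' s + gamma * \sum_(s1 : S) ptrans pi' s s1 * F s1.
Proof.
under eq_bigr do rewrite mulrDr.
rewrite big_split /=; congr (_ + _).
under [in RHS]eq_bigr do rewrite big_distrl /=.
rewrite [in RHS]exchange_big /= big_distrr /=; apply: eq_bigr => a _.
rewrite mulrCA big_distrr /=; congr (_ * _).
by apply: eq_bigr => s1 _; rewrite mulrA.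
Qed.

Hypothesis P_dist : forall s a, is_dist (P s a).
Hypothesis r_01 : forall s a, 0 <= r s a <= 1.
Hypothesis gamma_01 : 0 <= gamma < 1.

Lemma P_ge0 s a s1 : 0 <= P s a s1. Proof. by case: (P_dist s a). Qed.

Lemma sum_P s a : \sum_(s1 : S) P s a s1 = 1. Proof. by case: (P_dist s a). Qed.

Lemma ptrans_ge0 pi : is_policy pi -> forall s s1, 0 <= ptrans pi s s1.
Proof.
by move=> Hpi s s1; apply: sumr_ge0 => a _; rewrite mulr_ge0 ?(policy_ge0 Hpi) ?P_ge0.
Qed.

Lemma sum_ptrans pi : is_policy pi -> forall s, \sum_(s1 : S) ptrans pi s s1 = 1.
Proof.
move=> Hpi s; rewrite /ptrans exchange_big /= -(sum_policy Hpi s).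
by apply: eq_bigr => a _; rewrite -big_distrr /= sum_P mulr1.
Qed.

Lemma preward_ge0 pi : is_policy pi -> forall s, 0 <= preward pi s.
Proof.
move=> Hpi s; apply: sumr_ge0 => a _.
by rewrite mulr_ge0 ?(policy_ge0 Hpi) //; case/andP: (r_01 s a).
Qed.

Lemma preward_le1 pi : is_policy pi -> forall s, preward pi s <= 1.
Proof.
move=> Hpi s; rewrite -(sum_policy Hpi s); apply: ler_sum => a _.
by rewrite ler_piMr ?(policy_ge0 Hpi) //; case/andP: (r_01 s a).
Qed.

Section FixedPolicy.
Variable pi : S -> A -> R.
Hypothesis pi_policy : is_policy pi.

Lemma state_dist_ge0 mu t x : (forall y, 0 <= mu y) -> 0 <= state_dist P pi mu t x.
Proof.
move=> mu_ge0; elim: t x => [|t IH] x //.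
rewrite state_distS; apply: sumr_ge0 => s _; apply: sumr_ge0 => a _.
by rewrite !mulr_ge0 // ?(policy_ge0 pi_policy) ?P_ge0.
Qed.

Lemma sum_state_dist mu t : \sum_(x : S) state_dist P pi mu t x = \sum_(x : S) mu x.
Proof.
elim: t => [|t IH] //.
under eq_bigr do rewrite state_distS.
rewrite exchange_big /= -IH; apply: eq_bigr => s _.
rewrite exchange_big /=.
under eq_bigr do rewrite -big_distrr /= sum_P mulr1.
by rewrite -big_distrr /= (sum_policy pi_policy) mulr1.
Qed.

Lemma dirac_ge0 (s y : S) : 0 <= dirac s y.
Proof. by rewrite /Defs.dirac; case: ifP. Qed.

Lemma reward_at_ge0 s t : 0 <= reward_at pi s t.
Proof.
apply: sumr_ge0 => s' _; apply: sumr_ge0 => a _.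
rewrite mulr_ge0 ?mulr_ge0 ?(policy_ge0 pi_policy) ?state_dist_ge0 //.
  exact: dirac_ge0.
by case/andP: (r_01 s' a).
Qed.

Lemma reward_at_le1 s t : reward_at pi s t <= 1.
Proof.
rewrite -(sum_dirac s) -(sum_state_dist _ t); apply: ler_sum => s' _.
under eq_bigr do rewrite -mulrA.
rewrite -big_distrr /= -[leRHS]mulr1 ler_wpM2l ?(preward_le1 pi_policy) //.
by apply: state_dist_ge0; exact: dirac_ge0.
Qed.

End FixedPolicy.

Lemma sum_geometric_le n : \sum_(0 <= k < n) gamma ^+ k <= (1 - gamma)^-1.
Proof.
case/andP: gamma_01 => g0 g1.
have geom : (1 - gamma) * \sum_(0 <= k < n) gamma ^+ k = 1 - gamma ^+ n.
  by rewrite big_mkord; have := subrX1 gamma n; lra.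
rewrite -[leRHS]mulr1 ler_pdivlMl ?subr_gt0 // geom.
by rewrite lerBlDr lerDl exprn_ge0.
Qed.

Lemma is_cvg_series_geometric_dom (u : nat -> R) :
  (forall t, 0 <= u t <= gamma ^+ t) -> cvgn (series u).
Proof.
move=> u_dom; apply: cvgP; apply: nondecreasing_cvgn.
  by apply: nondecreasing_series => n _ _; case/andP: (u_dom n).
exists (1 - gamma)^-1 => _ [n _ <-]; apply: le_trans (sum_geometric_le n).
by apply: ler_sum => k _; case/andP: (u_dom k).
Qed.

Lemma Vfun_bellman pi : is_policy pi -> forall s,
  V pi s = preward pi s + gamma * \sum_(s1 : S) ptrans pi s s1 * V pi s1.
Proof.
move=> Hpi s.
have cvgV s0 : series (disc_reward pi s0) @ \oo --> V pi s0.
  apply: (is_cvg_series_geometric_dom _) => t.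
  case/andP: gamma_01 => g0 _.
  rewrite mulr_ge0 ?exprn_ge0 ?reward_at_ge0 //=.
  by rewrite ler_piMr ?exprn_ge0 ?reward_at_le1.
have cvgVS : (fun n => series (disc_reward pi s) n.+1) @ \oo --> V pi s.
  by rewrite (cvg_shiftS (series (disc_reward pi s))); exact: cvgV.
have cvgBellman : (fun n => series (disc_reward pi s) n.+1) @ \oo -->
    preward pi s + gamma * \sum_(s1 : S) ptrans pi s s1 * V pi s1.
  under eq_fun do rewrite series_disc_rewardS.
  apply: cvgD; first exact: cvg_cst.
  apply: cvgMl_tmp; apply: cvg_big => //; first exact: add_continuous.
  by move=> s1 _; apply: cvgMl_tmp; exact: cvgV.
exact: cvg_unique _ cvgVS cvgBellman.
Qed.

(* A discrete minimum principle: evaluate the inequality at a minimiser of D. *)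
Lemma supersolution_ge0 (M : S -> S -> R) (D g : S -> R) :
  (forall s s1, 0 <= M s s1) -> (forall s, \sum_(s1 : S) M s s1 = 1) ->
  (forall s, 0 <= g s) ->
  (forall s, g s + gamma * \sum_(s1 : S) M s s1 * D s1 <= D s) ->
  forall s, 0 <= D s.
Proof.
move=> M_ge0 M_sum g_ge0 D_super s.
have [m D_min] : exists m, forall x, D m <= D x.
  by exists [arg min_(x < s) D x]%O; case: arg_minP => // m _ Hm x; exact: Hm.
have Dm_le : D m <= \sum_(s1 : S) M m s1 * D s1.
  rewrite -[leLHS]mul1r -(M_sum m) big_distrl /=.
  by apply: ler_sum => s1 _; rewrite ler_wpM2l.
apply: le_trans (D_min s).
have := D_super m; have := g_ge0 m; case/andP: gamma_01 => g0 g1.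
have : gamma * D m <= gamma * \sum_(s1 : S) M m s1 * D s1 by rewrite ler_wpM2l.
nra.
Qed.

Lemma subsolution_le (M : S -> S -> R) (D : S -> R) (G : R) :
  (forall s s1, 0 <= M s s1) -> (forall s, \sum_(s1 : S) M s s1 = 1) ->
  (forall s, D s <= G + gamma * \sum_(s1 : S) M s s1 * D s1) ->
  forall s, D s <= G / (1 - gamma).
Proof.
move=> M_ge0 M_sum D_sub s; rewrite -subr_ge0; move: s.
apply: (@supersolution_ge0 M _ (fun=> 0)) => // s.
case/andP: gamma_01 => g0 g1.
set c := G / (1 - gamma).
have Gc : c * (1 - gamma) = G by rewrite divfK // subr_eq0 gt_eqF.
have -> : \sum_(s1 : S) M s s1 * (c - D s1) = c - \sum_(s1 : S) M s s1 * D s1.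
  under eq_bigr do rewrite mulrBr.
  by rewrite sumrB -big_distrl /= M_sum mul1r.
have := D_sub s; nra.
Qed.

Lemma sum_policy_Ufun pi : is_policy pi -> forall s, \sum_(a : A) pi s a * U pi s a = 0.
Proof.
move=> Hpi s; rewrite /Ufun.
under eq_bigr do rewrite mulrBr.
by rewrite sumrB sum_policy_Qvalue -Vfun_bellman // sum_policy_const // subrr.
Qed.

Lemma performance_difference pi' pi : is_policy pi' -> is_policy pi -> forall s,
  V pi' s - V pi s = \sum_(a : A) pi' s a * U pi s a +
    gamma * \sum_(s1 : S) ptrans pi' s s1 * (V pi' s1 - V pi s1).
Proof.
move=> Hpi' Hpi s; rewrite /Ufun.
under eq_bigr do rewrite mulrBr.
rewrite sumrB sum_policy_Qvalue sum_policy_const //.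
under [X in _ = _ + gamma * X]eq_bigr do rewrite mulrBr.
by rewrite sumrB {1}(Vfun_bellman Hpi' s); ring.
Qed.

Lemma Vfun_ge0 pi : is_policy pi -> forall s, 0 <= V pi s.
Proof.
move=> Hpi; apply: (supersolution_ge0 (ptrans_ge0 Hpi) (sum_ptrans Hpi)).
  exact: preward_ge0.
by move=> s; rewrite -Vfun_bellman.
Qed.

Lemma Vfun_le pi : is_policy pi -> forall s, V pi s <= (1 - gamma)^-1.
Proof.
move=> Hpi s; rewrite -[leRHS]mul1r.
apply: (subsolution_le (ptrans_ge0 Hpi) (sum_ptrans Hpi)) => s0.
by rewrite {1}(Vfun_bellman Hpi s0) lerD2r preward_le1.
Qed.

Lemma norm_Ufun_le pi : is_policy pi -> forall s a, `|U pi s a| <= (1 - gamma)^-1.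
Proof.
move=> Hpi s a; case/andP: gamma_01 => g0 g1; case/andP: (r_01 s a) => r0 r1.
have EV_ge0 : 0 <= \sum_(s1 : S) P s a s1 * V pi s1.
  by apply: sumr_ge0 => s1 _; rewrite mulr_ge0 ?P_ge0 ?Vfun_ge0.
have EV_le : \sum_(s1 : S) P s a s1 * V pi s1 <= (1 - gamma)^-1.
  apply: (@le_trans _ _ (\sum_(s1 : S) P s a s1 * (1 - gamma)^-1)).
    by apply: ler_sum => s1 _; rewrite ler_wpM2l ?P_ge0 ?Vfun_le.
  by rewrite -big_distrl /= sum_P mul1r.
have geom : (1 - gamma)^-1 = 1 + gamma * (1 - gamma)^-1.
  by field; rewrite subr_eq0 gt_eqF.
have := Vfun_ge0 Hpi s; have := Vfun_le Hpi s.
have := ler_wpM2l g0 EV_le; have := mulr_ge0 g0 EV_ge0.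
rewrite /Ufun /Qfun ler_norml; lra.
Qed.

(* The recursion of [performance_difference] for [V pi' - V pi] has a nonnegative
   source term, so the minimum principle applies. *)
Lemma policy_improvement pi' pi : is_policy pi' -> is_policy pi ->
  (forall s, 0 <= \sum_(a : A) pi' s a * U pi s a) ->
  forall s, \sum_(a : A) pi' s a * U pi s a <= V pi' s - V pi s.
Proof.
move=> Hpi' Hpi gain_ge0.
have diff_ge0 : forall s, 0 <= V pi' s - V pi s.
  apply: (supersolution_ge0 (ptrans_ge0 Hpi') (sum_ptrans Hpi') gain_ge0) => s.
  by rewrite (performance_difference Hpi' Hpi).
move=> s; rewrite (performance_difference Hpi' Hpi) lerDl.
case/andP: gamma_01 => g0 _; rewrite mulr_ge0 //.
by apply: sumr_ge0 => s1 _; rewrite mulr_ge0 ?diff_ge0 ?ptrans_ge0.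
Qed.

End PolicyEvaluation.

Section ExpFacts.
Variable R : realType.

Lemma ln_le_subr1 (y : R) : 0 < y -> ln y <= y - 1.
Proof. by move=> y0; have := expR_ge1Dx (ln y); rewrite lnK ?posrE //; lra. Qed.

Lemma expR_subr1_le (x : R) : expR x - 1 <= x * expR x.
Proof.
have := expR_ge1Dx (- x); have := expR_gt0 x.
have : expR (- x) * expR x = 1 by rewrite expRN mulVf // gt_eqF ?expR_gt0.
nra.
Qed.

Lemma expR_subr1_mul_ge (x X : R) : `|x| <= X -> expR (- X) * x ^+ 2 <= (expR x - 1) * x.
Proof.
move=> /[dup] xX; rewrite ler_norml => /andP[xNX xX'].
have := expR_ge1Dx x; have := expR_subr1_le x.
have := expR_gt0 x; have := expR_gt0 (- X).
have : expR (- X) <= expR x by rewrite ler_expR.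
have X0 : 0 <= X by exact: le_trans xX.
have : expR (- X) <= 1 by rewrite expR_le1 oppr_le0.
by case: (lerP 0 x) => x_sign; nra.
Qed.

Lemma expR_subr1_le_sqr (x X : R) : `|x| <= X -> expR x - 1 <= x + expR X * x ^+ 2.
Proof.
move=> /[dup] xX; rewrite ler_norml => /andP[xNX xX'].
have := expR_ge1Dx x; have := expR_subr1_le x; have := expR_gt0 x.
have : expR x <= expR X by rewrite ler_expR.
have X0 : 0 <= X by exact: le_trans xX.
have : 1 <= expR X by rewrite -expR0 ler_expR.
by case: (lerP 0 x) => x_sign; nra.
Qed.

Lemma sigmoid_gt0 (x : R) : 0 < sigmoid x.
Proof. by rewrite /sigmoid mul1r invr_gt0 ltr_wpDr ?expR_ge0. Qed.

Lemma sigmoid_le1 (x : R) : sigmoid x <= 1.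
Proof. by rewrite /sigmoid mul1r invf_le1 ?ltr_wpDr ?expR_ge0 // lerDl expR_ge0. Qed.

Lemma sigmoid_ge_half (x : R) : 0 <= x -> 2^-1 <= sigmoid x.
Proof.
move=> x0; rewrite /sigmoid mul1r.
have : expR (- x) <= 1 by rewrite expR_le1 oppr_le0.
by rewrite lef_pV2 ?posrE ?ltr_wpDr ?expR_ge0 //; lra.
Qed.

End ExpFacts.

Section DGStep.
Variables (R : realType) (S A : finType).
Variables (P : S -> A -> S -> R) (r : S -> A -> R) (gamma : R).
Hypothesis P_dist : forall s a, is_dist (P s a).
Hypothesis r_01 : forall s a, 0 <= r s a <= 1.
Hypothesis gamma_01 : 0 <= gamma < 1.
Variables (eta alpha : R).
Hypothesis eta_gt0 : 0 < eta.
Hypothesis alpha_gt0 : 0 < alpha.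

Local Notation U := (Ufun P r gamma).
Local Notation W := (wfun P r gamma eta).
Local Notation Z := (Zfun P r gamma eta alpha).
Local Notation step := (dg_step P r gamma eta alpha).
Local Notation X := (alpha * (1 - gamma)^-1).

Definition wsq_adv (pi : S -> A -> R) s := \sum_(a : A) pi s a * W pi s a * U pi s a ^+ 2.

(* [X] bounds the exponents [alpha w U] of the update; [expR (- X)] comes from
   [expR_subr1_mul_ge] and [1 / expR X] from the normaliser bound [Z <= expR X]. *)
Definition dg_gain_rate := alpha * expR (- X) / expR X.

Lemma dg_gain_rate_gt0 : 0 < dg_gain_rate.
Proof. by rewrite divr_gt0 ?mulr_gt0 ?expR_gt0. Qed.

Section OnePolicy.
Variable pi : S -> A -> R.
Hypothesis pi_policy : is_policy pi.
Hypothesis pi_full : full_support pi.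

Lemma wfun_gt0 s a : 0 < W pi s a. Proof. exact: sigmoid_gt0. Qed.

Lemma wfun_le1 s a : W pi s a <= 1. Proof. exact: sigmoid_le1. Qed.

Lemma wfun_ge_half s a : 0 <= U pi s a -> 2^-1 <= W pi s a.
Proof.
move=> U_ge0; have ell_ge0 : 0 <= ellfun pi s a.
  by rewrite /ellfun oppr_ge0 ln_le0 // (policy_le1 pi_policy).
by apply: sigmoid_ge_half; rewrite divr_ge0 ?mulr_ge0 // ltW.
Qed.

Lemma norm_dg_exponent_le s a : `|alpha * W pi s a * U pi s a| <= X.
Proof.
rewrite 2!normrM (gtr0_norm alpha_gt0) (gtr0_norm (wfun_gt0 s a)) -mulrA ler_pM2l //.
have := norm_Ufun_le P_dist r_01 gamma_01 pi_policy s a.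
have := wfun_le1 s a; have := wfun_gt0 s a; have := normr_ge0 (U pi s a).
nra.
Qed.

Lemma Zfun_ge s : expR (- X) <= Z pi s.
Proof.
rewrite -(sum_policy_const pi_policy s (expR (- X))).
apply: ler_sum => a _; rewrite ler_wpM2l ?(policy_ge0 pi_policy) // ler_expR.
by have := norm_dg_exponent_le s a; rewrite ler_norml => /andP[].
Qed.

Lemma Zfun_gt0 s : 0 < Z pi s.
Proof. exact: lt_le_trans (expR_gt0 _) (Zfun_ge s). Qed.

Lemma Zfun_le s : Z pi s <= expR X.
Proof.
rewrite -(sum_policy_const pi_policy s (expR X)).
apply: ler_sum => a _; rewrite ler_wpM2l ?(policy_ge0 pi_policy) // ler_expR.
by have := norm_dg_exponent_le s a; rewrite ler_norml => /andP[].
Qed.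

Lemma dg_step_gt0 s a : 0 < step pi s a.
Proof. by rewrite /dg_step divr_gt0 ?mulr_gt0 ?expR_gt0 ?Zfun_gt0 ?pi_full. Qed.

Lemma dg_step_policy : is_policy (step pi).
Proof.
move=> s; split=> [a|]; first exact: ltW (dg_step_gt0 s a).
by rewrite /dg_step -big_distrl /= mulfV // gt_eqF ?Zfun_gt0.
Qed.

Lemma ln_dg_step s a :
  ln (step pi s a) = ln (pi s a) + alpha * W pi s a * U pi s a - ln (Z pi s).
Proof.
rewrite /dg_step lnM ?posrE ?mulr_gt0 ?expR_gt0 ?invr_gt0 ?Zfun_gt0 ?pi_full //.
by rewrite lnM ?posrE ?expR_gt0 ?pi_full // expRK lnV ?posrE ?Zfun_gt0.
Qed.

Lemma wsq_adv_ge0 s : 0 <= wsq_adv pi s.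
Proof.
apply: sumr_ge0 => a _.
by rewrite mulr_ge0 ?sqr_ge0 ?mulr_ge0 ?(policy_ge0 pi_policy) ?ltW ?wfun_gt0.
Qed.

Lemma dg_exp_adv_ge s a : expR (- X) * (alpha * (W pi s a * U pi s a ^+ 2)) <=
  (expR (alpha * W pi s a * U pi s a) - 1) * U pi s a.
Proof.
have aw_gt0 : 0 < alpha * W pi s a by rewrite mulr_gt0 ?wfun_gt0.
rewrite -(ler_pM2l aw_gt0).
have -> : alpha * W pi s a * (expR (- X) * (alpha * (W pi s a * U pi s a ^+ 2))) =
  expR (- X) * (alpha * W pi s a * U pi s a) ^+ 2 by ring.
have -> : alpha * W pi s a * ((expR (alpha * W pi s a * U pi s a) - 1) * U pi s a) =
  (expR (alpha * W pi s a * U pi s a) - 1) * (alpha * W pi s a * U pi s a) by ring.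
exact: expR_subr1_mul_ge (norm_dg_exponent_le s a).
Qed.

Lemma sum_dg_step_adv s : \sum_(a : A) step pi s a * U pi s a =
  (\sum_(a : A) pi s a * (expR (alpha * W pi s a * U pi s a) - 1) * U pi s a) / Z pi s.
Proof.
have -> : \sum_(a : A) pi s a * (expR (alpha * W pi s a * U pi s a) - 1) * U pi s a =
    \sum_(a : A) pi s a * expR (alpha * W pi s a * U pi s a) * U pi s a -
    \sum_(a : A) pi s a * U pi s a.
  by rewrite -sumrB; apply: eq_bigr => a _; ring.
rewrite (sum_policy_Ufun P_dist r_01 gamma_01 pi_policy) subr0 mulr_suml.
by apply: eq_bigr => a _; rewrite /dg_step mulrAC.
Qed.

Lemma dg_step_adv_ge s : dg_gain_rate * wsq_adv pi s <= \sum_(a : A) step pi s a * U pi s a.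
Proof.
set N := \sum_(a : A) pi s a * (expR (alpha * W pi s a * U pi s a) - 1) * U pi s a.
have N_ge : expR (- X) * alpha * wsq_adv pi s <= N.
  rewrite /wsq_adv big_distrr /=; apply: ler_sum => a _.
  have -> : expR (- X) * alpha * (pi s a * W pi s a * U pi s a ^+ 2) =
    pi s a * (expR (- X) * (alpha * (W pi s a * U pi s a ^+ 2))) by ring.
  by rewrite -(mulrA (pi s a)) ler_wpM2l ?(policy_ge0 pi_policy) ?dg_exp_adv_ge.
have N_ge0 : 0 <= N.
  by apply: le_trans N_ge; rewrite !mulr_ge0 ?wsq_adv_ge0 ?expR_ge0 ?ltW.
rewrite sum_dg_step_adv -/N; apply: (@le_trans _ _ (N / expR X)).
  have -> : dg_gain_rate * wsq_adv pi s = expR (- X) * alpha * wsq_adv pi s / expR X.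
    by rewrite /dg_gain_rate; ring.
  by rewrite ler_wpM2r ?invr_ge0 ?expR_ge0.
by rewrite ler_wpM2l // lef_pV2 ?posrE ?expR_gt0 ?Zfun_gt0 ?Zfun_le.
Qed.

Lemma dg_exp_adv_le s a : pi s a * (expR (alpha * W pi s a * U pi s a) - 1) <=
  alpha * (pi s a * W pi s a * U pi s a) +
  expR X * alpha ^+ 2 * (pi s a * W pi s a * U pi s a ^+ 2).
Proof.
have w_sqr_le : W pi s a ^+ 2 <= W pi s a.
  by have := wfun_gt0 s a; have := wfun_le1 s a; nra.
have c_ge0 : 0 <= expR X * alpha ^+ 2 * (pi s a * U pi s a ^+ 2).
  by do 2?apply: mulr_ge0; rewrite ?expR_ge0 ?sqr_ge0 ?(policy_ge0 pi_policy).
have := ler_wpM2l c_ge0 w_sqr_le.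
have := ler_wpM2l (policy_ge0 pi_policy s a)
  (expR_subr1_le_sqr (norm_dg_exponent_le s a)).
lra.
Qed.

Lemma Zfun_subr1 s :
  Z pi s - 1 = \sum_(a : A) pi s a * (expR (alpha * W pi s a * U pi s a) - 1).
Proof.
under [RHS]eq_bigr do rewrite mulrBr mulr1.
by rewrite sumrB (sum_policy pi_policy).
Qed.

Lemma ln_Zfun_le s : ln (Z pi s) <=
  alpha * (\sum_(a : A) pi s a * W pi s a * U pi s a) + expR X * alpha ^+ 2 * wsq_adv pi s.
Proof.
apply: le_trans (ln_le_subr1 (Zfun_gt0 s)) _.
rewrite Zfun_subr1 /wsq_adv !big_distrr /= -big_split /=.
by apply: ler_sum => a _; exact: dg_exp_adv_le.
Qed.

(* AM-GM: [u <= u^2 / (2 tau) + tau / 2]. *)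
Lemma sum_wadv_le s tau : 0 < tau ->
  \sum_(a : A) pi s a * W pi s a * U pi s a <= wsq_adv pi s / (2 * tau) + tau / 2.
Proof.
move=> tau_gt0.
rewrite -[X in _ <= _ + X](sum_policy_const pi_policy s) /wsq_adv mulr_suml -big_split /=.
apply: ler_sum => a _.
have pw_ge0 : 0 <= pi s a * W pi s a by rewrite mulr_ge0 ?(policy_ge0 pi_policy) ?ltW ?wfun_gt0.
have amgm : U pi s a <= U pi s a ^+ 2 / (2 * tau) + tau / 2.
  rewrite -subr_ge0.
  have -> : U pi s a ^+ 2 / (2 * tau) + tau / 2 - U pi s a =
    (U pi s a - tau) ^+ 2 / (2 * tau) by field; rewrite gt_eqF.
  by rewrite divr_ge0 ?sqr_ge0 ?mulr_ge0 ?ltW.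
have w_tau : pi s a * W pi s a * (tau / 2) <= pi s a * (tau / 2).
  by rewrite -mulrA ler_wpM2l ?(policy_ge0 pi_policy) // ler_piMl ?wfun_le1 ?divr_ge0 ?ltW.
have := ler_wpM2l pw_ge0 amgm; rewrite mulrDr; lra.
Qed.

Lemma ln_dg_step_ge_adv s a u : 0 < u -> u <= U pi s a ->
  alpha * u / 4 - (alpha / u + expR X * alpha ^+ 2) * wsq_adv pi s <=
  ln (step pi s a) - ln (pi s a).
Proof.
move=> u_gt0 u_le; rewrite ln_dg_step.
have w_ge := wfun_ge_half (le_trans (ltW u_gt0) u_le).
have exponent_ge : alpha * u / 2 <= alpha * W pi s a * U pi s a.
  have wu : u / 2 <= W pi s a * U pi s a by have := wfun_le1 s a; nra.
  by have := ler_wpM2l (ltW alpha_gt0) wu; lra.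
have := sum_wadv_le s (divr_gt0 u_gt0 (ltr0Sn _ 1)).
have -> : wsq_adv pi s / (2 * (u / 2)) = wsq_adv pi s / u by congr (_ / _); field.
move/(ler_wpM2l (ltW alpha_gt0)) => sum_le.
have := ln_Zfun_le s.
have -> : (alpha / u + expR X * alpha ^+ 2) * wsq_adv pi s =
  alpha * (wsq_adv pi s / u) + expR X * alpha ^+ 2 * wsq_adv pi s by field; rewrite gt_eqF.
lra.
Qed.

Lemma ln_dg_step_ge s a0 : (forall b, b != a0 -> U pi s b <= 0) -> 0 <= U pi s a0 ->
  - (expR X * alpha ^+ 2 * wsq_adv pi s) <= ln (step pi s a0) - ln (pi s a0).
Proof.
move=> U_le0 U_ge0; rewrite ln_dg_step.
have Z_le1 : Z pi s - 1 <= pi s a0 * (expR (alpha * W pi s a0 * U pi s a0) - 1).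
  rewrite Zfun_subr1 (bigD1 a0) //= gerDl.
  apply: sumr_le0 => b b_ne; rewrite mulr_ge0_le0 ?(policy_ge0 pi_policy) // subr_le0 expR_le1.
  by rewrite mulr_ge0_le0 ?U_le0 // mulr_ge0 ?ltW ?wfun_gt0.
have wsq_ge : pi s a0 * W pi s a0 * U pi s a0 ^+ 2 <= wsq_adv pi s.
  rewrite /wsq_adv (bigD1 a0) //= lerDl; apply: sumr_ge0 => b _.
  by rewrite mulr_ge0 ?sqr_ge0 ?mulr_ge0 ?(policy_ge0 pi_policy) ?ltW ?wfun_gt0.
have lin_le : alpha * (pi s a0 * W pi s a0 * U pi s a0) <= alpha * W pi s a0 * U pi s a0.
  have wu_ge0 : 0 <= W pi s a0 * U pi s a0 by rewrite mulr_ge0 // ltW ?wfun_gt0.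
  have : pi s a0 * (W pi s a0 * U pi s a0) <= W pi s a0 * U pi s a0.
    by rewrite ler_piMl ?(policy_le1 pi_policy).
  by move/(ler_wpM2l (ltW alpha_gt0)); lra.
have := ln_le_subr1 (Zfun_gt0 s); have := dg_exp_adv_le s a0.
have := ler_wpM2l (mulr_ge0 (expR_ge0 X) (sqr_ge0 alpha)) wsq_ge.
lra.
Qed.

End OnePolicy.
End DGStep.

Section RealSequences.
Variable R : realType.

Lemma telescope_lower_bound (f e : nat -> R) (N : nat) (a b : R) :
  (forall t, (N <= t)%N -> a - b * e t <= f t.+1 - f t) ->
  forall k, f N + k%:R * a - b * \sum_(N <= t < N + k) e t <= f (N + k)%N.
Proof.
move=> incr; elim=> [|k IH]; first by rewrite addn0 big_geq // mul0r mulr0 addr0 subr0.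
rewrite addnS big_nat_recr ?leq_addr //=.
by have := incr (N + k)%N (leq_addr _ _); rewrite -natr1; lra.
Qed.

Lemma quadratic_decay_mul_le1 (d : nat -> R) (T0 : nat) (kap : R) : 0 < kap ->
  (forall t, 0 <= d t) -> (forall t, (T0 <= t)%N -> d t.+1 <= d t - kap * d t ^+ 2) ->
  forall k, k%:R * kap * d (T0 + k)%N <= 1.
Proof.
move=> kap_gt0 d_ge0 decay; elim=> [|k IH]; first by rewrite !mul0r ler01.
have := decay (T0 + k)%N (leq_addr _ _); rewrite addnS -natr1.
move: IH (d_ge0 (T0 + k)%N) (d_ge0 (T0 + k).+1); rewrite -!mulrA.
set y := d (T0 + k)%N; set y' := d (T0 + k).+1; set n : R := k%:R.
move=> IH y_ge0 y'_ge0 decay_k.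
have n_ge0 : 0 <= n by rewrite ler0n.
have z_ge0 : 0 <= kap * y by rewrite mulr_ge0 ?(ltW kap_gt0).
have w_ge0 : 0 <= kap * y' by rewrite mulr_ge0 ?(ltW kap_gt0).
have w_le : kap * y' <= kap * y - (kap * y) ^+ 2.
  by have := ler_wpM2l (ltW kap_gt0) decay_k; rewrite mulrBr expr2; lra.
set z := kap * y in z_ge0 w_le IH *; set w := kap * y' in w_ge0 w_le *.
have z_le1 : z <= 1 by nra.
(* [(n + 1) w <= (n + 1) z (1 - z) <= 1] given [n z <= 1] *)
have : 0 <= (1 - n * z) * (1 - z) by apply: mulr_ge0; rewrite subr_ge0.
have : 0 <= (n + 1) * (z - z ^+ 2 - w).
  by apply: mulr_ge0; [rewrite addr_ge0 | rewrite subr_ge0].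
nra.
Qed.

Lemma quadratic_decay_rate (d : nat -> R) (T0 : nat) (kap Bd : R) : 0 < kap ->
  (forall t, 0 <= d t <= Bd) ->
  (forall t, (T0 <= t)%N -> d t.+1 <= d t - kap * d t ^+ 2) ->
  exists C, forall t, (0 < t)%N -> d t <= C / t%:R.
Proof.
move=> kap_gt0 d_bnd decay.
have d_ge0 t : 0 <= d t by case/andP: (d_bnd t).
have Bd_ge0 : 0 <= Bd by case/andP: (d_bnd 0%N) => /le_trans; apply.
exists (T0.+1%:R / kap + Bd * T0%:R) => t t_gt0.
have t_pos : 0 < t%:R :> R by rewrite ltr0n.
have T0_ge0 : 0 <= T0%:R :> R by rewrite ler0n.
rewrite ler_pdivlMr //; case: (leqP t T0) => [t_le | T0_lt].
  have : t%:R <= T0%:R :> R by rewrite ler_nat.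
  have : 0 <= T0.+1%:R / kap by rewrite divr_ge0 ?ltW.
  by case/andP: (d_bnd t); nra.
have -> : t = (T0 + (t - T0))%N by rewrite subnKC // ltnW.
have := quadratic_decay_mul_le1 kap_gt0 d_ge0 decay (t - T0).
have : 1 <= (t - T0)%:R :> R by rewrite ler1n subn_gt0.
rewrite natrD -natr1; set k : R := (t - T0)%:R; set y := d _ => k_ge1 ky_le.
have : y * (T0%:R + k) <= (T0%:R + 1) / kap.
  by rewrite ler_pdivlMr //; have := d_ge0 (T0 + (t - T0))%N; nra.
have := mulr_ge0 Bd_ge0 T0_ge0; lra.
Qed.

Lemma sqr_sum_le (S : finType) (x : S -> R) :
  (\sum_(s : S) x s) ^+ 2 <= #|S|%:R * \sum_(s : S) x s ^+ 2.
Proof.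
rewrite expr2 big_distrl /=; under eq_bigr do rewrite big_distrr /=.
apply: (@le_trans _ _ (\sum_(i : S) \sum_(j : S) (x i ^+ 2 + x j ^+ 2) / 2)).
  apply: ler_sum => i _; apply: ler_sum => j _; rewrite ler_pdivlMr //.
  by have := sqr_ge0 (x i - x j); rewrite sqrrB; lra.
set q := \sum_(i : S) x i ^+ 2.
have row i : \sum_(j : S) (x i ^+ 2 + x j ^+ 2) / 2 = (#|S|%:R * x i ^+ 2 + q) / 2.
  by rewrite -big_distrl /= big_split /= sumr_const mulr_natl.
under eq_bigr do rewrite row.
rewrite -big_distrl /= big_split /= sumr_const -big_distrr /= -/q -mulr_natl.
lra.
Qed.

Lemma prodr_le_factor (S : finType) (x : S -> R) (s : S) :
  (forall i, 0 <= x i <= 1) -> \prod_(i : S) x i <= x s.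
Proof.
move=> x_01; rewrite (bigD1 s) //= ler_piMr //; first by case/andP: (x_01 s).
by apply: prodr_ile1 => i _; exact: x_01.
Qed.

End RealSequences.

Section Trajectory.
Variables (R : realType) (S A : finType).
Variables (P : S -> A -> S -> R) (r : S -> A -> R) (gamma : R).
Hypothesis P_dist : forall s a, is_dist (P s a).
Hypothesis r_01 : forall s a, 0 <= r s a <= 1.
Hypothesis gamma_01 : 0 <= gamma < 1.
Variables (eta alpha : R).
Hypothesis alpha_gt0 : 0 < alpha.
Variable pi0 : S -> A -> R.
Hypothesis pi0_policy : is_policy pi0.
Hypothesis pi0_full : full_support pi0.

Local Notation V := (Vfun P r gamma).
Local Notation pit := (dg_iter P r gamma eta alpha pi0).
Local Notation wsq_adv := (wsq_adv P r gamma eta).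
Local Notation c0 := (dg_gain_rate gamma alpha).

Lemma dg_iter_policy_full t : is_policy (pit t) /\ full_support (pit t).
Proof.
elim: t => [|t [pol full]] //; split.
  exact: (dg_step_policy P_dist r_01 gamma_01 eta alpha_gt0 pol full).
by move=> s a; exact: (dg_step_gt0 P_dist r_01 gamma_01 eta alpha_gt0 pol full).
Qed.

Lemma dg_iter_policy t : is_policy (pit t). Proof. by case: (dg_iter_policy_full t). Qed.

Lemma dg_iter_full t : full_support (pit t). Proof. by case: (dg_iter_policy_full t). Qed.

Lemma dg_iter_gain_ge0 t s : 0 <= c0 * wsq_adv (pit t) s.
Proof.
rewrite mulr_ge0 ?(wsq_adv_ge0 P r gamma eta (dg_iter_policy t)) //.
exact: ltW (dg_gain_rate_gt0 gamma alpha_gt0).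
Qed.

Lemma Vfun_dg_iter_gain t s : c0 * wsq_adv (pit t) s <= V (pit t.+1) s - V (pit t) s.
Proof.
have step_ge s0 : c0 * wsq_adv (pit t) s0 <=
    \sum_(a : A) pit t.+1 s0 a * Ufun P r gamma (pit t) s0 a.
  exact: (dg_step_adv_ge P_dist r_01 gamma_01 eta alpha_gt0 (dg_iter_policy t)).
apply: le_trans (step_ge s) _.
apply: (policy_improvement P_dist r_01 gamma_01 (dg_iter_policy _) (dg_iter_policy _)).
by move=> s0; exact: le_trans (dg_iter_gain_ge0 t s0) (step_ge s0).
Qed.

Lemma Vfun_dg_iter_le t t' s : (t <= t')%N -> V (pit t) s <= V (pit t') s.
Proof.
move=> /subnKC <-; elim: (t' - t)%N => [|k IH]; first by rewrite addn0.
apply: le_trans IH _; rewrite addnS -subr_ge0.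
exact: le_trans (dg_iter_gain_ge0 _ s) (Vfun_dg_iter_gain _ s).
Qed.

Lemma sum_wsq_adv_le N n s :
  \sum_(N <= t < n) wsq_adv (pit t) s <= (1 - gamma)^-1 / c0.
Proof.
have c0_gt0 : 0 < c0 := dg_gain_rate_gt0 gamma alpha_gt0.
rewrite ler_pdivlMr // mulrC big_distrr /=.
case: (leqP N n) => [Nn | nN]; last first.
  rewrite big_geq; last exact: ltnW.
  by case/andP: gamma_01 => _ g1; rewrite invr_ge0 subr_ge0 ltW.
apply: (@le_trans _ _ (V (pit n) s - V (pit N) s)).
  rewrite -(telescope_sumr (fun t => V (pit t) s) Nn).
  by apply: ler_sum => t _; exact: Vfun_dg_iter_gain.
have := Vfun_le P_dist r_01 gamma_01 (dg_iter_policy n) s.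
have := Vfun_ge0 P_dist r_01 gamma_01 (dg_iter_policy N) s.
lra.
Qed.

End Trajectory.

Section Optimality.
Variables (R : realType) (S A : finType).
Variables (P : S -> A -> S -> R) (r : S -> A -> R) (gamma : R).
Hypothesis P_dist : forall s a, is_dist (P s a).
Hypothesis r_01 : forall s a, 0 <= r s a <= 1.
Hypothesis gamma_01 : 0 <= gamma < 1.
Variable pistar : S -> A -> R.
Hypothesis pistar_opt : unique_optimal_policy P r gamma pistar.

Local Notation V := (Vfun P r gamma).
Local Notation U := (Ufun P r gamma).

Lemma opt_policy : is_policy pistar.
Proof. by case: pistar_opt => [[]]. Qed.

Lemma Vfun_le_opt pi : is_policy pi -> forall s, V pi s <= V pistar s.
Proof. by case: pistar_opt => [[_ H] _]; exact: H. Qed.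

Definition switch_at (pi : S -> A -> R) (s : S) (a : A) : S -> A -> R :=
  fun s1 b => if s1 == s then (b == a)%:R else pi s1 b.

Lemma switch_at_policy pi s a : is_policy pi -> is_policy (switch_at pi s a).
Proof.
move=> Hpi s1; rewrite /switch_at; case: eqP => _; last exact: Hpi.
split=> [b|]; first exact: ler0n.
by rewrite (bigD1 a) //= eqxx big1 ?addr0 // => b /negbTE ->.
Qed.

Lemma sum_switch_at pi s a s1 (f : A -> R) :
  \sum_(b : A) switch_at pi s a s1 b * f b =
  if s1 == s then f a else \sum_(b : A) pi s1 b * f b.
Proof.
rewrite /switch_at; case: eqP => // _.
by rewrite (bigD1 a) //= eqxx mul1r big1 ?addr0 // => b /negbTE ->; rewrite mul0r.
Qed.

Lemma Ufun_switch_at_le s a : 0 <= U pistar s a ->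
  U pistar s a <= V (switch_at pistar s a) s - V pistar s /\
  forall s1, V pistar s1 <= V (switch_at pistar s a) s1.
Proof.
move=> U_ge0; have switch_pol := switch_at_policy s a opt_policy.
have gain_ge0 s1 : 0 <= \sum_(b : A) switch_at pistar s a s1 b * U pistar s1 b.
  rewrite sum_switch_at; case: eqP => [->|_] //.
  by rewrite (sum_policy_Ufun P_dist r_01 gamma_01 opt_policy).
have improve := policy_improvement P_dist r_01 gamma_01 switch_pol opt_policy gain_ge0.
split; first by have := improve s; rewrite sum_switch_at eqxx.
by move=> s1; rewrite -subr_ge0; exact: le_trans (gain_ge0 s1) (improve s1).
Qed.

Lemma Ufun_opt_le0 s a : U pistar s a <= 0.
Proof.
rewrite leNgt; apply/negP => U_gt0.
have [gain _] := Ufun_switch_at_le (ltW U_gt0).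
by have := Vfun_le_opt (switch_at_policy s a opt_policy) s; lra.
Qed.

Lemma Ufun_opt_eq0_switch_at s a : U pistar s a = 0 -> switch_at pistar s a = pistar.
Proof.
move=> U_eq0; have U_ge0 : 0 <= U pistar s a by rewrite U_eq0.
have [_ ge_opt] := Ufun_switch_at_le U_ge0.
have switch_pol := switch_at_policy s a opt_policy.
case: pistar_opt => _ uniq; apply: uniq; split=> // pi pi_pol s1.
apply: le_trans (Vfun_le_opt pi_pol s1) (ge_opt s1).
Qed.

Lemma exists_Ufun_opt_eq0 s : exists a, U pistar s a = 0.
Proof.
have [a pi_a_neq0] : exists a, pistar s a != 0.
  apply/existsP; apply: contraT; rewrite negb_exists => /forallP pi_eq0.
  have := sum_policy opt_policy s; rewrite big1 => [/eqP|b _]; last exact/eqP/negPn.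
  by rewrite eq_sym oner_eq0.
have terms_eq0 b : - (pistar s b * U pistar s b) = 0.
  apply: (psumr_eq0P (P := xpredT) (F := fun b => - (pistar s b * U pistar s b))) => // [c _|].
    by rewrite oppr_ge0 mulr_ge0_le0 ?(policy_ge0 opt_policy) ?Ufun_opt_le0.
  by rewrite sumrN (sum_policy_Ufun P_dist r_01 gamma_01 opt_policy) oppr0.
exists a; move/eqP: (terms_eq0 a).
by rewrite oppr_eq0 mulf_eq0 (negbTE pi_a_neq0) => /eqP.
Qed.

Lemma Ufun_opt_eq0_inj s a b : U pistar s a = 0 -> U pistar s b = 0 -> a = b.
Proof.
move=> /Ufun_opt_eq0_switch_at Ea /Ufun_opt_eq0_switch_at Eb.
have : switch_at pistar s a s a = switch_at pistar s b s a by rewrite Ea Eb.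
rewrite /switch_at !eqxx; case: (a =P b) => // _.
by rewrite /= mulr1n mulr0n => /eqP; rewrite oner_eq0.
Qed.

Lemma exists_opt_action : exists astar : S -> A, forall s,
  U pistar s (astar s) = 0 /\ forall b, b != astar s -> U pistar s b < 0.
Proof.
have [astar U_eq0] := fin_all_exists exists_Ufun_opt_eq0.
exists astar => s; split=> // b b_neq; rewrite lt_neqAle Ufun_opt_le0 andbT.
by apply: contra b_neq => /eqP U_b_eq0; rewrite (Ufun_opt_eq0_inj U_b_eq0 (U_eq0 s)).
Qed.

End Optimality.

Section Convergence.
Variables (R : realType) (S A : finType).
Variables (P : S -> A -> S -> R) (r : S -> A -> R) (gamma : R).
Hypothesis P_dist : forall s a, is_dist (P s a).
Hypothesis r_01 : forall s a, 0 <= r s a <= 1.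
Hypothesis gamma_01 : 0 <= gamma < 1.
Variable pistar : S -> A -> R.
Hypothesis pistar_opt : unique_optimal_policy P r gamma pistar.
Variables (eta alpha : R).
Hypothesis eta_gt0 : 0 < eta.
Hypothesis alpha_gt0 : 0 < alpha.
Variable pi0 : S -> A -> R.
Hypothesis pi0_policy : is_policy pi0.
Hypothesis pi0_full : full_support pi0.

Local Notation V := (Vfun P r gamma).
Local Notation U := (Ufun P r gamma).
Local Notation pit := (dg_iter P r gamma eta alpha pi0).
Local Notation wsq_adv := (wsq_adv P r gamma eta).
Local Notation c0 := (dg_gain_rate gamma alpha).
Local Notation X := (alpha * (1 - gamma)^-1).

Let pit_policy := dg_iter_policy P_dist r_01 gamma_01 eta alpha_gt0 pi0_policy pi0_full.
Let pit_full := dg_iter_full P_dist r_01 gamma_01 eta alpha_gt0 pi0_policy pi0_full.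
Let sum_wsq_adv_pit_le :=
  sum_wsq_adv_le P_dist r_01 gamma_01 eta alpha_gt0 pi0_policy pi0_full.
Let Vfun_pit_le := Vfun_dg_iter_le P_dist r_01 gamma_01 eta alpha_gt0 pi0_policy pi0_full.

Definition Vlim s := sup (range (fun t => V (pit t) s)).

Lemma has_sup_Vfun_dg_iter s : has_sup (range (fun t => V (pit t) s)).
Proof.
split; first by exists (V (pit 0) s); exists 0%N.
by exists (1 - gamma)^-1 => _ [t _ <-]; exact: Vfun_le.
Qed.

Lemma Vfun_dg_iter_le_Vlim t s : V (pit t) s <= Vlim s.
Proof. by apply: (ub_le_sup (has_sup_Vfun_dg_iter s).2); exists t. Qed.

Lemma Vfun_dg_iter_near_Vlim eps : 0 < eps ->
  exists N, forall t, (N <= t)%N -> forall s, Vlim s - V (pit t) s <= eps.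
Proof.
move=> eps_gt0.
have near s : exists N, Vlim s - eps < V (pit N) s.
  by have [_ [N _ <-] lt] := sup_adherent eps_gt0 (has_sup_Vfun_dg_iter s); exists N.
have [N N_near] := fin_all_exists near.
exists (\max_s N s)%N => t t_ge s.
have := Vfun_pit_le s (leq_trans (leq_bigmax s) t_ge); have := N_near s; lra.
Qed.

(* Otherwise [ln pit(a|s)] would grow linearly up to the summable error of
   [sum_wsq_adv_le], although it stays [<= 0]. *)
Lemma Ufun_dg_iter_not_eventually_ge s a u N : 0 < u ->
  ~ (forall t, (N <= t)%N -> u <= U (pit t) s a).
Proof.
move=> u_gt0 U_ge.
set K := alpha / u + expR X * alpha ^+ 2; set g := alpha * u / 4.
have g_gt0 : 0 < g by rewrite divr_gt0 ?mulr_gt0.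
have K_ge0 : 0 <= K.
  by rewrite addr_ge0 ?(mulr_ge0 (expR_ge0 _) (sqr_ge0 _)) ?divr_ge0 ?ltW.
have growth := @telescope_lower_bound _ (fun t => ln (pit t s a))
  (fun t => wsq_adv (pit t) s) N g K (fun t t_ge =>
     ln_dg_step_ge_adv P_dist r_01 gamma_01 eta_gt0 alpha_gt0
       (pit_policy t) (pit_full t) u_gt0 (U_ge t t_ge)).
set Y := K * ((1 - gamma)^-1 / c0) - ln (pit N s a).
have [k Yk] : exists k : nat, Y < k%:R * g.
  by exists (Num.truncn (Y / g)).+1; rewrite -ltr_pdivrMr // truncnS_gt.
have := growth k; have := ler_wpM2l K_ge0 (sum_wsq_adv_pit_le N (N + k) s).
have : ln (pit (N + k)%N s a) <= 0 by rewrite ln_le0 ?(policy_le1 (pit_policy _)).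
rewrite /Y in Yk; lra.
Qed.

Let pistar_policy := opt_policy pistar_opt.

Definition Qlim s a := r s a + gamma * \sum_(s1 : S) P s a s1 * Vlim s1.

Lemma Qlim_le_Vlim s a : Qlim s a <= Vlim s.
Proof.
rewrite leNgt; apply/negP => Vlim_lt; set u := Qlim s a - Vlim s.
have u2_gt0 : 0 < u / 2 by rewrite divr_gt0 // subr_gt0.
have [N near] := Vfun_dg_iter_near_Vlim u2_gt0.
apply: (@Ufun_dg_iter_not_eventually_ge s a (u / 2) N) => // t t_ge.
have EV_ge : \sum_(s1 : S) P s a s1 * Vlim s1 - u / 2 <=
    \sum_(s1 : S) P s a s1 * V (pit t) s1.
  have -> : \sum_(s1 : S) P s a s1 * Vlim s1 - u / 2 =
      \sum_(s1 : S) P s a s1 * (Vlim s1 - u / 2).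
    by under [RHS]eq_bigr do rewrite mulrBr; rewrite sumrB -big_distrl /= sum_P ?mul1r.
  apply: ler_sum => s1 _; rewrite ler_wpM2l ?(P_ge0 P_dist) //.
  by have := near t t_ge s1; lra.
case/andP: gamma_01 => g0 g1.
have := ler_wpM2l g0 EV_ge; have := Vfun_dg_iter_le_Vlim t s.
have : gamma * (u / 2) <= u / 2 by rewrite ler_piMl ?ltW.
rewrite /Ufun /Qfun; move: Vlim_lt; rewrite /u /Qlim; lra.
Qed.

Lemma Vfun_opt_le_Vlim s : V pistar s <= Vlim s.
Proof.
rewrite -subr_ge0; move: s.
apply: (supersolution_ge0 gamma_01 (g := fun=> 0)
  (ptrans_ge0 P_dist pistar_policy) (sum_ptrans P_dist pistar_policy)) => // s /=.
have : \sum_(a : A) pistar s a * Qlim s a <= Vlim s.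
  rewrite -[leRHS](sum_policy_const pistar_policy s); apply: ler_sum => a _.
  by rewrite ler_wpM2l ?(policy_ge0 pistar_policy) ?Qlim_le_Vlim.
rewrite /Qlim sum_policy_Qvalue (Vfun_bellman P_dist r_01 gamma_01 pistar_policy s) add0r.
under eq_bigr do rewrite mulrBr.
rewrite sumrB; lra.
Qed.

Lemma Vfun_dg_iter_near_opt eps : 0 < eps ->
  exists N, forall t, (N <= t)%N -> forall s, V pistar s - V (pit t) s <= eps.
Proof.
move=> eps_gt0; have [N near] := Vfun_dg_iter_near_Vlim eps_gt0.
by exists N => t t_ge s; have := near t t_ge s; have := Vfun_opt_le_Vlim s; lra.
Qed.

Lemma Ufun_dg_iter_le t s b :
  U (pit t) s b <= U pistar s b + (V pistar s - V (pit t) s).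
Proof.
have EV_le : \sum_(s1 : S) P s b s1 * V (pit t) s1 <= \sum_(s1 : S) P s b s1 * V pistar s1.
  apply: ler_sum => s1 _; rewrite ler_wpM2l ?(P_ge0 P_dist) //.
  exact: (Vfun_le_opt pistar_opt (pit_policy t)).
case/andP: gamma_01 => g0 _; have := ler_wpM2l g0 EV_le.
rewrite /Ufun /Qfun; lra.
Qed.

Lemma eventually_Ufun_dg_iter_lt0 (astar : S -> A) :
  (forall s b, b != astar s -> U pistar s b < 0) ->
  exists T0, forall t, (T0 <= t)%N -> forall s b, b != astar s -> U (pit t) s b < 0.
Proof.
move=> Uopt_lt0.
have near x : exists N, x.2 != astar x.1 ->
    forall t, (N <= t)%N -> U (pit t) x.1 x.2 < 0.
  case: x => s b /=; have [b_neq|] := boolP (b != astar s); last by exists 0%N.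
  have eps_gt0 : 0 < - U pistar s b / 2 by rewrite divr_gt0 // oppr_gt0 Uopt_lt0.
  have [N N_near] := Vfun_dg_iter_near_opt eps_gt0.
  exists N => _ t t_ge; have := N_near t t_ge s; have := Ufun_dg_iter_le t s b.
  have := Uopt_lt0 s b b_neq; lra.
have [N N_near] := fin_all_exists near.
exists (\max_x N x)%N => t t_ge s b b_neq.
exact: (N_near (s, b)) b_neq t (leq_trans (leq_bigmax (s, b)) t_ge).
Qed.

Section Rate.
Variables (astar : S -> A) (T0 : nat).
Hypothesis Ufun_lt0 :
  forall t, (T0 <= t)%N -> forall s b, b != astar s -> U (pit t) s b < 0.

Lemma Ufun_dg_iter_opt_ge0 t s : (T0 <= t)%N -> 0 <= U (pit t) s (astar s).
Proof.
move=> t_ge; have := sum_policy_Ufun P_dist r_01 gamma_01 (pit_policy t) s.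
rewrite (bigD1 (astar s)) //= => sum_eq0.
have rest_le0 : \sum_(b | b != astar s) pit t s b * U (pit t) s b <= 0.
  apply: sumr_le0 => b b_neq; rewrite mulr_ge0_le0 ?(policy_ge0 (pit_policy t)) //.
  exact: ltW (Ufun_lt0 t_ge b_neq).
have : 0 <= pit t s (astar s) * U (pit t) s (astar s) by lra.
by rewrite pmulr_rge0 ?pit_full.
Qed.

Lemma ln_dg_iter_opt_ge k s :
  ln (pit T0 s (astar s)) - expR X * alpha ^+ 2 * ((1 - gamma)^-1 / c0) <=
  ln (pit (T0 + k)%N s (astar s)).
Proof.
have step t : (T0 <= t)%N -> 0 - expR X * alpha ^+ 2 * wsq_adv (pit t) s <=
    ln (pit t.+1 s (astar s)) - ln (pit t s (astar s)).
  move=> t_ge; rewrite sub0r.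
  apply: (ln_dg_step_ge P_dist r_01 gamma_01 eta alpha_gt0 (pit_policy t) (pit_full t)).
    by move=> b b_neq; exact: ltW (Ufun_lt0 t_ge b_neq).
  exact: Ufun_dg_iter_opt_ge0.
have := @telescope_lower_bound _ (fun t => ln (pit t s (astar s)))
  (fun t => wsq_adv (pit t) s) T0 0 _ step k.
have := ler_wpM2l (mulr_ge0 (expR_ge0 X) (sqr_ge0 alpha))
  (sum_wsq_adv_pit_le T0 (T0 + k) s).
rewrite mulr0 addr0; lra.
Qed.

Definition opt_prob_lb :=
  expR (- (expR X * alpha ^+ 2 * ((1 - gamma)^-1 / c0))) * \prod_(s : S) pit T0 s (astar s).

Lemma opt_prob_lb_gt0 : 0 < opt_prob_lb.
Proof. by rewrite mulr_gt0 ?expR_gt0 // prodr_gt0 // => s _; exact: pit_full. Qed.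

Lemma dg_iter_opt_ge t s : (T0 <= t)%N -> opt_prob_lb <= pit t s (astar s).
Proof.
move=> /subnKC <-; have ln_ge := ln_dg_iter_opt_ge (t - T0) s.
rewrite -ler_expR expRD !lnK ?posrE ?pit_full // in ln_ge; apply: le_trans ln_ge.
rewrite /opt_prob_lb mulrC ler_wpM2r ?expR_ge0 //.
apply: prodr_le_factor => i.
by rewrite (policy_ge0 (pit_policy T0)) (policy_le1 (pit_policy T0)).
Qed.

Lemma wsq_adv_ge_opt t s : (T0 <= t)%N ->
  opt_prob_lb / 2 * U (pit t) s (astar s) ^+ 2 <= wsq_adv (pit t) s.
Proof.
move=> t_ge; rewrite /wsq_adv (bigD1 (astar s)) //=.
have rest_ge0 : 0 <= \sum_(b | b != astar s)
    pit t s b * wfun P r gamma eta (pit t) s b * U (pit t) s b ^+ 2.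
  apply: sumr_ge0 => b _; rewrite mulr_ge0 ?sqr_ge0 // mulr_ge0 ?(policy_ge0 (pit_policy t)) //.
  exact: ltW (wfun_gt0 _ _ _ _ _ _ _).
have w_ge := wfun_ge_half eta_gt0 (pit_policy t) (Ufun_dg_iter_opt_ge0 s t_ge).
have p_ge := dg_iter_opt_ge s t_ge; have p0_gt0 := opt_prob_lb_gt0.
have : opt_prob_lb / 2 <= pit t s (astar s) * wfun P r gamma eta (pit t) s (astar s) by nra.
move/(ler_wpM2r (sqr_ge0 (U (pit t) s (astar s)))); lra.
Qed.

Lemma Vfun_opt_sub_le t s0 : (T0 <= t)%N ->
  V pistar s0 - V (pit t) s0 <= (\sum_(s : S) U (pit t) s (astar s)) / (1 - gamma).
Proof.
move=> t_ge; move: s0.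
apply: (subsolution_le gamma_01 (ptrans_ge0 P_dist pistar_policy)
  (sum_ptrans P_dist pistar_policy)) => s.
rewrite (performance_difference P_dist r_01 gamma_01 pistar_policy (pit_policy t)) lerD2r.
apply: (@le_trans _ _ (U (pit t) s (astar s))).
  rewrite -[leRHS](sum_policy_const pistar_policy s); apply: ler_sum => a _.
  rewrite ler_wpM2l ?(policy_ge0 pistar_policy) //.
  have [->|a_neq] := eqVneq a (astar s); first exact: lexx.
  exact: ltW (lt_le_trans (Ufun_lt0 t_ge a_neq) (Ufun_dg_iter_opt_ge0 s t_ge)).
rewrite (bigD1 s) //= lerDl; apply: sumr_ge0 => s1 _; exact: Ufun_dg_iter_opt_ge0.
Qed.

Definition subopt t := \sum_(s : S) (V pistar s - V (pit t) s).

Lemma subopt_ge0 t : 0 <= subopt t.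
Proof.
apply: sumr_ge0 => s _; rewrite subr_ge0.
exact: (Vfun_le_opt pistar_opt (pit_policy t)).
Qed.

Lemma subopt_le t : subopt t <= #|S|%:R * (1 - gamma)^-1.
Proof.
rewrite (_ : _ * _ = \sum_(s : S) (1 - gamma)^-1); last by rewrite sumr_const mulr_natl.
apply: ler_sum => s _.
have := Vfun_le P_dist r_01 gamma_01 pistar_policy s.
have := Vfun_ge0 P_dist r_01 gamma_01 (pit_policy t) s; lra.
Qed.

Lemma subopt_gain t : (T0 <= t)%N ->
  c0 * (opt_prob_lb / 2) * \sum_(s : S) U (pit t) s (astar s) ^+ 2 <= subopt t - subopt t.+1.
Proof.
move=> t_ge; rewrite /subopt -sumrB big_distrr /=; apply: ler_sum => s _.
have -> : V pistar s - V (pit t) s - (V pistar s - V (pit t.+1) s) =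
  V (pit t.+1) s - V (pit t) s by ring.
apply: le_trans (Vfun_dg_iter_gain P_dist r_01 gamma_01 eta alpha_gt0 pi0_policy pi0_full t s).
rewrite -mulrA ler_wpM2l ?wsq_adv_ge_opt //.
exact: ltW (dg_gain_rate_gt0 gamma alpha_gt0).
Qed.

Lemma subopt_le_sum_adv t : (T0 <= t)%N ->
  (1 - gamma) * subopt t <= #|S|%:R * \sum_(s : S) U (pit t) s (astar s).
Proof.
move=> t_ge; case/andP: gamma_01 => _ g1; set G := \sum_(s : S) _.
rewrite mulrC -ler_pdivlMr ?subr_gt0 // -mulrA.
rewrite (_ : _ * _ = \sum_(s : S) (G / (1 - gamma))); last by rewrite sumr_const mulr_natl.
by apply: ler_sum => s _; exact: Vfun_opt_sub_le.
Qed.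

(* The [+ 1] only keeps the rate positive when [S] is empty. *)
Definition decay_rate := c0 * opt_prob_lb / 2 * (1 - gamma) ^+ 2 / (#|S|%:R + 1) ^+ 3.

Lemma decay_rate_gt0 : 0 < decay_rate.
Proof.
case/andP: gamma_01 => _ g1.
apply: divr_gt0; first apply: mulr_gt0; last by rewrite exprn_gt0 // ltr_wpDl ?ler0n.
  by rewrite divr_gt0 // mulr_gt0 ?opt_prob_lb_gt0 ?dg_gain_rate_gt0.
by rewrite exprn_gt0 // subr_gt0.
Qed.

(* Cauchy-Schwarz links the gain (a sum of squares) to the suboptimality (a sum). *)
Lemma subopt_decay t : (T0 <= t)%N ->
  subopt t.+1 <= subopt t - decay_rate * subopt t ^+ 2.
Proof.
move=> t_ge; case/andP: gamma_01 => g0 g1.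
have D_G := subopt_le_sum_adv t_ge; have gain := subopt_gain t_ge.
have G_ge0 : 0 <= \sum_(s : S) U (pit t) s (astar s).
  by apply: sumr_ge0 => s _; exact: Ufun_dg_iter_opt_ge0.
have D_ge0 := subopt_ge0 t.
set G := \sum_(s : S) U (pit t) s (astar s) in D_G G_ge0 gain *.
set Q := \sum_(s : S) U (pit t) s (astar s) ^+ 2 in gain *.
set n : R := #|S|%:R in D_G *; set D := subopt t in D_G D_ge0 gain *.
have n_ge0 : 0 <= n by rewrite ler0n.
have n1_gt0 : 0 < (n + 1) ^+ 3 by rewrite exprn_gt0 // ltr_wpDl.
have Q_ge0 : 0 <= Q by apply: sumr_ge0 => s _; exact: sqr_ge0.
have D_le : ((1 - gamma) * D) ^+ 2 <= (n * G) ^+ 2.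
  have lhs_ge0 : 0 <= (1 - gamma) * D by rewrite mulr_ge0 // subr_ge0 ltW.
  have rhs_ge0 : 0 <= n * G by rewrite mulr_ge0.
  by rewrite ler_sqr ?nnegrE.
have nG_le : (n * G) ^+ 2 <= (n + 1) ^+ 3 * Q.
  rewrite exprMn; apply: (@le_trans _ _ (n ^+ 2 * (n * Q))).
    by rewrite ler_wpM2l ?sqr_ge0 ?sqr_sum_le.
  rewrite mulrA -exprSr ler_wpM2r // lerXn2r ?nnegrE ?addr_ge0 //.
  by rewrite lerDl.
have D_Q : (1 - gamma) ^+ 2 * D ^+ 2 / (n + 1) ^+ 3 <= Q.
  by rewrite ler_pdivrMr // -exprMn [Q * _]mulrC (le_trans D_le nG_le).
have c_ge0 : 0 <= c0 * (opt_prob_lb / 2).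
  apply: mulr_ge0; first exact: ltW (dg_gain_rate_gt0 gamma alpha_gt0).
  by apply: divr_ge0; first exact: ltW opt_prob_lb_gt0.
have := ler_wpM2l c_ge0 D_Q.
have -> : c0 * (opt_prob_lb / 2) * ((1 - gamma) ^+ 2 * D ^+ 2 / (n + 1) ^+ 3) =
  decay_rate * D ^+ 2 by rewrite /decay_rate /n; field; rewrite gt_eqF.
lra.
Qed.

End Rate.

Lemma Vrho_dg_iter_rate (rho : S -> R) : is_dist rho ->
  exists C, forall t, (0 < t)%N ->
    Vrho P r gamma rho pistar - Vrho P r gamma rho (pit t) <= C / t%:R.
Proof.
move=> [rho_ge0 rho_sum].
have [astar astar_opt] := exists_opt_action P_dist r_01 gamma_01 pistar_opt.
have [T0 U_lt0] := eventually_Ufun_dg_iter_lt0 (fun s => (astar_opt s).2).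
have subopt_bnd t : 0 <= subopt t <= #|S|%:R * (1 - gamma)^-1.
  by rewrite subopt_ge0 subopt_le.
have [C rate] := quadratic_decay_rate (decay_rate_gt0 astar T0) subopt_bnd (subopt_decay U_lt0).
exists C => t t_gt0; apply: le_trans (rate t t_gt0).
rewrite /Vrho -sumrB; apply: ler_sum => s _.
rewrite -mulrBr ler_piMl ?subr_ge0 ?(Vfun_le_opt pistar_opt (pit_policy t)) //.
by rewrite -rho_sum (bigD1 s) //= lerDl sumr_ge0.
Qed.

End Convergence.

Theorem corollary4 (R : realType) (S A : finType)
  (P : S -> A -> S -> R) (r : S -> A -> R) (gamma : R) (rho : S -> R)
  (pistar : S -> A -> R) (dmin : R) :
  finite_mdp P r gamma rho ->
  unique_optimal_policy P r gamma pistar ->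
  0 < dmin ->
  (forall pi, is_policy pi -> full_support pi ->
     forall s, dmin <= dvisit P gamma rho pi s) ->
  forall eta : R, 0 < eta ->
  forall pi0 : S -> A -> R, is_policy pi0 -> full_support pi0 ->
  exists alpha0 : R, 0 < alpha0 /\
    forall alpha : R, 0 < alpha -> alpha < alpha0 ->
      exists C : R, forall t : nat, (0 < t)%N ->
        Vrho P r gamma rho pistar
          - Vrho P r gamma rho (dg_iter P r gamma eta alpha pi0 t)
        <= C / t%:R.
Proof.
move=> [P_dist [r_01 [gamma_01 rho_dist]]] pistar_opt _ _ eta eta_gt0 pi0 pi0_policy pi0_full.
exists 1; split=> // alpha alpha_gt0 _.
exact: (Vrho_dg_iter_rate P_dist r_01 gamma_01 pistar_opt eta_gt0 alpha_gt0
  pi0_policy pi0_full rho_dist).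
Qed.
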